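(* In $NOM$, for every finite sequence $\Gamma$ and formulas $\phi,\psi$, the following rules are derivable: from $\Gamma\vdash\phi$ infer $\Gamma\vdash\neg\neg\phi$; from $\Gamma\vdash\neg\neg\phi$ infer $\Gamma\vdash\phi$; from $\Gamma,\phi\vdash\psi$ and $\Gamma,\phi\vdash\neg\psi$ infer $\Gamma\vdash\neg\phi$; from $\Gamma,\neg\phi\vdash\psi$ and $\Gamma,\neg\phi\vdash\neg\psi$ infer $\Gamma\vdash\phi$; from $\Gamma,\phi\vdash\neg\phi$ infer $\Gamma\vdash\neg\phi$; from $\Gamma,\neg\phi\vdash\phi$ infer $\Gamma\vdash\phi$.
   Context: The propositional deductive system $NOM$: formulas are built from propositional letters using $\wedge$, $\rightarrow$, $\neg$. Sequents are $\phi_1,\ldots,\phi_n\vdash\psi$ ($n\ge0$) with antecedent a finite ordered sequence. With $\Gamma$ a finite possibly empty sequence of formulas and $\phi,\psi,\chi$ formulas, the rules of $NOM$ are: (assumption) $\Gamma,\phi\vdash\phi$; (cut) $\Gamma\vdash\phi$, $\Gamma,\phi\vdash\psi$ $\Rightarrow$ $\Gamma\vdash\psi$; (paste) $\Gamma\vdash\phi$, $\Gamma\vdash\psi$ $\Rightarrow$ $\Gamma,\phi\vdash\psi$; (compatible exchange) $\Gamma,\phi,\psi\vdash\phi$, $\Gamma,\phi,\psi\vdash\chi$, $\Gamma,\psi,\phi\vdash\psi$ $\Rightarrow$ $\Gamma,\psi,\phi\vdash\chi$; ($\wedge$-intro) $\Gamma\vdash\phi$, $\Gamma\vdash\psi$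 $\Rightarrow$ $\Gamma\vdash\phi\wedge\psi$; ($\wedge$-elim) $\Gamma\vdash\phi\wedge\psi$ $\Rightarrow$ $\Gamma\vdash\phi$ and $\Rightarrow$ $\Gamma\vdash\psi$; ($\rightarrow$-intro) $\Gamma,\phi\vdash\psi$ $\Rightarrow$ $\Gamma\vdash\phi\rightarrow\psi$; ($\rightarrow$-elim) $\Gamma\vdash\phi\rightarrow\psi$ $\Rightarrow$ $\Gamma,\phi\vdash\psi$; (excluded middle) $\Gamma,\phi\vdash\psi$, $\Gamma,\neg\phi\vdash\psi$ $\Rightarrow$ $\Gamma\vdash\psi$; (explosion) $\Gamma\vdash\neg\phi$ $\Rightarrow$ $\Gamma,\phi\vdash\psi$. A rule schema is derivable if in every instance its conclusion can be derived from its premises using these rules. *)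

From Stdlib Require Import List.
Import ListNotations.

Inductive form : Type :=
| Var : nat -> form
| And : form -> form -> form
| Imp : form -> form -> form
| Neg : form -> form.

(* A sequent  phi_1,...,phi_n |- psi  is a pair (antecedent list, succedent).
   The antecedent "Gamma, phi" is Gamma ++ [phi] (phi appended at the end). *)
Definition sequent : Type := (list form * form)%type.

Inductive Der (Prem : sequent -> Prop) : list form -> form -> Prop :=
| d_prem : forall G p, Prem (G, p) -> Der Prem G p
| d_assum : forall G p, Der Prem (G ++ [p]) p
| d_cut : forall G p q, Der Prem G p -> Der Prem (G ++ [p]) q -> Der Prem G q
| d_paste : forall G p q, Der Prem G p -> Der Prem G q -> Der Prem (G ++ [p]) q
| d_cexch : forall G p q r,
    Der Prem (G ++ [p; q]) p -> Der Prem (G ++ [p; q]) r ->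
    Der Prem (G ++ [q; p]) q -> Der Prem (G ++ [q; p]) r
| d_andI : forall G p q, Der Prem G p -> Der Prem G q -> Der Prem G (And p q)
| d_andE1 : forall G p q, Der Prem G (And p q) -> Der Prem G p
| d_andE2 : forall G p q, Der Prem G (And p q) -> Der Prem G q
| d_impI : forall G p q, Der Prem (G ++ [p]) q -> Der Prem G (Imp p q)
| d_impE : forall G p q, Der Prem G (Imp p q) -> Der Prem (G ++ [p]) q
| d_em : forall G p q, Der Prem (G ++ [p]) q -> Der Prem (G ++ [Neg p]) q -> Der Prem G q
| d_expl : forall G p q, Der Prem G (Neg p) -> Der Prem (G ++ [p]) q.

Definition derivable_rule (prems : list sequent) (concl : sequent) : Prop :=
  Der (fun s => In s prems) (fst concl) (snd concl).

From Stdlib Require Import List.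
Import ListNotations.

Section DerivedRules.

Variable Prem : sequent -> Prop.

Lemma der_dneg_elim_assum G p : Der Prem (G ++ [Neg (Neg p)]) p.
Proof.
  apply (d_em Prem _ p).
  - apply d_assum.
  - apply d_expl, d_assum.
Qed.

(* Split on [Neg p]: under [Neg p] the added [p] explodes; under [Neg (Neg p)]
   the context already proves [p], so pasting it in changes nothing. *)
Lemma der_dneg_intro_assum G p : Der Prem (G ++ [p]) (Neg (Neg p)).
Proof.
  apply d_impE, (d_em Prem G (Neg p)); apply d_impI.
  - apply d_expl, d_assum.
  - apply d_paste; [apply der_dneg_elim_assum | apply d_assum].
Qed.

Lemma der_dneg_intro G p : Der Prem G p -> Der Prem G (Neg (Neg p)).
Proof. intro Hp. apply (d_cut Prem G p); [exact Hp | apply der_dneg_intro_assum]. Qed.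

Lemma der_dneg_elim G p : Der Prem G (Neg (Neg p)) -> Der Prem G p.
Proof. intro Hp. apply (d_cut Prem G (Neg (Neg p))); [exact Hp | apply der_dneg_elim_assum]. Qed.

Lemma der_neg_self G p : Der Prem (G ++ [p]) (Neg p) -> Der Prem G (Neg p).
Proof. intro H. apply (d_em Prem G p); [exact H | apply d_assum]. Qed.

Lemma der_self_neg G p : Der Prem (G ++ [Neg p]) p -> Der Prem G p.
Proof. intro H. apply (d_em Prem G p); [apply d_assum | exact H]. Qed.

Lemma der_contra G q r : Der Prem G q -> Der Prem G (Neg q) -> Der Prem G r.
Proof. intros Hq Hnq. apply (d_cut Prem G q); [exact Hq | apply d_expl, Hnq]. Qed.

Lemma der_neg_intro G p q :
  Der Prem (G ++ [p]) q -> Der Prem (G ++ [p]) (Neg q) -> Der Prem G (Neg p).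
Proof. intros Hq Hnq. apply der_neg_self, (der_contra _ q); assumption. Qed.

Lemma der_by_contra G p q :
  Der Prem (G ++ [Neg p]) q -> Der Prem (G ++ [Neg p]) (Neg q) -> Der Prem G p.
Proof. intros Hq Hnq. apply der_self_neg, (der_contra _ q); assumption. Qed.

End DerivedRules.

Theorem proposition2p4 : forall (G : list form) (p q : form),
  derivable_rule [(G, p)] (G, Neg (Neg p)) /\
  derivable_rule [(G, Neg (Neg p))] (G, p) /\
  derivable_rule [(G ++ [p], q); (G ++ [p], Neg q)] (G, Neg p) /\
  derivable_rule [(G ++ [Neg p], q); (G ++ [Neg p], Neg q)] (G, p) /\
  derivable_rule [(G ++ [p], Neg p)] (G, Neg p) /\
  derivable_rule [(G ++ [Neg p], p)] (G, p).
Proof.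
  intros G p q; unfold derivable_rule; simpl.
  repeat split.
  - apply der_dneg_intro, d_prem; simpl; tauto.
  - apply der_dneg_elim, d_prem; simpl; tauto.
  - apply (der_neg_intro _ _ _ q); apply d_prem; simpl; tauto.
  - apply (der_by_contra _ _ _ q); apply d_prem; simpl; tauto.
  - apply der_neg_self, d_prem; simpl; tauto.
  - apply der_self_neg, d_prem; simpl; tauto.
Qed.
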